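(* Under the standing assumptions in the context, let $\mathcal U$ be a sufficiently small neighborhood of $(0,\bar X)$ and let $\omega\subset\mathcal U\cap\{t>0\}$. Let $\phi>0$ be a bounded function on $\omega$ and suppose there is $C>0$ with \[ \phi^2 a\le C\Delta,\qquad \phi\,|\partial_t\Delta|\le C\Delta,\qquad \phi\,|\partial_t a|\le C a\qquad\text{on }\omega . \] Then there is $C'>0$ such that on $\omega$ \[ \phi^2\le C'\lambda_1,\qquad \phi\,|\partial_t\lambda_1|\le C'\lambda_1,\qquad \phi\,|\partial_t\lambda_2|\le C'\lambda_2 . \]
   Context: Let $W\subset\mathbb R^l$ be open, $\bar X\in W$, $c,T>0$, and let $a(t,X),b(t,X)$ be real-valued $C^\infty$ functions on $(-c,T)\times W$ with bounded derivatives of all orders. Assume $\Delta(t,X):=4a(t,X)^3-27b(t,X)^2\ge 0$ on $[0,T)\times W$, $a(0,\bar X)=0$, and $a(t,X)>0$ on $(0,T)\times W$. Let $S(t,X)=\begin{bmatrix}3&0&-a\\0&2a&3b\\-a&3b&a^2\end{bmatrix}$ and let $0\le\lambda_1\le\lambda_2\le\lambda_3$ be its eigenvalues (smooth on $\mathcal U\cap\{t>0\}$ for $\mathcal U$ a small neighborhood of $(0,\bar X)$). *)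

From HB Require Import structures.
From mathcomp Require Import all_boot all_order all_algebra.
From mathcomp Require Import all_classical all_reals all_analysis.
Set Implicit Arguments. Unset Strict Implicit. Unset Printing Implicit Defensive.
Import Order.TTheory GRing.Theory Num.Theory.
Import numFieldNormedType.Exports.
Local Open Scope classical_set_scope.
Local Open Scope ring_scope.

Section Defs.
Variables (R : realType) (l : nat).
Notation pt := (R * 'rV[R]_l)%type.

Definition shift (p v : pt) (h : R) : pt := (p.1 + h * v.1, p.2 + h *: v.2).

Definition dirD (f : pt -> R) (v : pt) : pt -> R :=
  fun p => derive1 (fun h => f (shift p v h)) 0.

Definition dir_derivable (f : pt -> R) (v : pt) (p : pt) : Prop :=
  derivable (fun h => f (shift p v h)) 0 1.

Definition iterD (f : pt -> R) (vs : seq pt) : pt -> R :=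
  foldr (fun v g => dirD g v) f vs.

(* f is C^infinity on the open set D with bounded derivatives of all orders:
   every iterated directional derivative exists at every point of D,
   is continuous on D and bounded on D. *)
Definition smooth_bdd (D : set pt) (f : pt -> R) : Prop :=
  forall vs : seq pt,
    (forall p v, D p -> dir_derivable (iterD f vs) v p) /\
    {within D, continuous (iterD f vs)} /\
    (exists M : R, forall p, D p -> `|iterD f vs p| <= M).
End Defs.

Definition Smx (R : realType) (a b : R) : 'M[R]_3 :=
  \matrix_(i < 3, j < 3)
    match nat_of_ord i, nat_of_ord j with
    | 0, 0 => 3 | 0, 1 => 0 | 0, _ => - a
    | 1, 0 => 0 | 1, 1 => 2 * a | 1, _ => 3 * b
    | _, 0 => - a | _, 1 => 3 * b | _, _ => a ^+ 2
    end.

Definition sorted_eigenvalues (R : realType) (M : 'M[R]_3) (l1 l2 l3 : R) : Prop :=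
  l1 <= l2 <= l3 /\
  char_poly M = ('X - l1%:P) * ('X - l2%:P) * ('X - l3%:P).

From Pilot Require Import Defs.
From HB Require Import structures.
From mathcomp Require Import all_boot all_order all_algebra.
From mathcomp Require Import all_classical all_reals all_analysis.
From mathcomp Require Import ring lra.
Set Implicit Arguments. Unset Strict Implicit. Unset Printing Implicit Defensive.
Import Order.TTheory GRing.Theory Num.Theory.
Import numFieldNormedType.Exports.
Local Open Scope classical_set_scope.
Local Open Scope ring_scope.

(* Proof of Lemma 3.1.  Write Delta = 4a^3 - 27b^2.  The characteristic
   polynomial of S is the cubic x^3 - e1 x^2 + e2 x - e3 with
   e1 = 3 + 2a + a^2, e2 = 6a + 2a^2 + 2a^3/3 + Delta/3 and e3 = Delta.
   1. Near (0, Xbar) we have a < 1/100; when moreover 0 < a and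
      0 <= Delta <= 4a^3, sign changes of the cubic locate its roots:
      0 <= l1 < a/2 < 3a/2 < l2 < 3a and 1 < l3 < 10.  So the roots are simple
      and l1 l2 l3 = Delta gives Delta <= 30 a l1 and Delta <= 30 a l2.
   2. The eigenvalues are only known as sorted roots, so their regularity in t
      is proved by hand with difference quotients: the sorted simple roots of
      a cubic with continuous coefficients are continuous, and a simple root g
      of a cubic with differentiable coefficients is differentiable with
      g' (g - u)(g - v) = e1' g^2 - e2' g + e3'  (u, v the other roots).
   3. Since |(l_i - l_j)(l_i - l_k)| >= a/2 for i = 1, 2, this identity and
      the hypotheses on a' and Delta' bound phi |l_i'| by 100 C l_i; the bound
      phi^2 <= 100 C l1 follows from phi^2 a <= C Delta <= 30 C a l1. *)

Section DifferenceQuotient.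
Variable R : realType.
Implicit Types (f g : R -> R) (t k L M : R).

Definition dq f t := fun h : R => h^-1 * (f (h + t) - f t).

(* The library's derivative at t along 1 is the limit of dq f t at 0. *)
Lemma dq_shiftE f t : (fun h : R => h^-1 *: ((f \o shift t) (h *: 1) - f t)) = dq f t.
Proof. by apply/funext => h; rewrite /dq /= /shift [h%:A]mulr1. Qed.

Lemma dq_cvg_derive f t L : dq f t @ 0^' --> L -> derivable f t 1 /\ derive1 f t = L.
Proof.
move=> dqL; split; first by rewrite /derivable dq_shiftE; apply/cvg_ex; exists L.
by rewrite derive1E /derive dq_shiftE; exact: cvg_lim.
Qed.

Lemma derivable_dq_cvg f t : derivable f t 1 -> dq f t @ 0^' --> derive1 f t.
Proof. by rewrite /derivable derive1E /derive !dq_shiftE. Qed.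

Lemma dq_cvg_cont f t L : dq f t @ 0^' --> L -> (fun h => f (h + t)) @ 0^' --> f t.
Proof.
move=> dqL.
have lim : (fun h => f t + h * dq f t h) @ 0^' --> f t + 0 * L.
  apply: cvgD; first exact: cvg_cst.
  by apply: cvgM => //; exact: nbhs_dnbhs.
rewrite mul0r addr0 in lim; apply: cvg_trans lim; apply: near_eq_cvg.
near=> h; have h0 : h != 0 by near: h; exact: nbhs_dnbhs_neq.
by rewrite /dq mulrA mulfV // mul1r; ring.
Unshelve. all: by end_near. Qed.

Lemma dqC_cvg t k : dq (fun _ => k) t @ 0^' --> (0 : R).
Proof.
have -> : dq (fun _ => k) t = (fun h => 0) by apply/funext => h; rewrite /dq subrr mulr0.
exact: cvg_cst.
Qed.

Lemma dqD_cvg f g t L M : dq f t @ 0^' --> L -> dq g t @ 0^' --> M ->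
  dq (fun s => f s + g s) t @ 0^' --> L + M.
Proof.
move=> dqf dqg.
have -> : dq (fun s => f s + g s) t = (fun h => dq f t h + dq g t h).
  by apply/funext => h; rewrite /dq; ring.
exact: cvgD.
Qed.

Lemma dqZ_cvg f t k L : dq f t @ 0^' --> L -> dq (fun s => k * f s) t @ 0^' --> k * L.
Proof.
move=> dqf; have -> : dq (fun s => k * f s) t = (fun h => k * dq f t h).
  by apply/funext => h; rewrite /dq; ring.
by apply: cvgM => //; exact: cvg_cst.
Qed.

Lemma dqM_cvg f g t L M : dq f t @ 0^' --> L -> dq g t @ 0^' --> M ->
  dq (fun s => f s * g s) t @ 0^' --> L * g t + f t * M.
Proof.
move=> dqf dqg.
have -> : dq (fun s => f s * g s) t = (fun h => dq f t h * g (h + t) + f t * dq g t h).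
  by apply/funext => h; rewrite /dq; ring.
apply: cvgD; first by apply: cvgM => //; exact: dq_cvg_cont dqg.
by apply: cvgM => //; exact: cvg_cst.
Qed.
End DifferenceQuotient.

(* A smooth function is differentiable in time: its t-derivative is the
   directional derivative along (1, 0). *)
Lemma smooth_bdd_derivable_t (R : realType) l (D : set (R * 'rV[R]_l))
    (f : R * 'rV[R]_l -> R) p :
  smooth_bdd D f -> D p -> derivable (fun s => f (s, p.2)) p.1 1.
Proof.
move=> sf Dp; have [df _] := sf [::].
have := df p (1, 0) Dp; rewrite /dir_derivable /= => /derivable_dq_cvg.
set F := fun h => _.
have -> : dq F 0 = dq (fun s => f (s, p.2)) p.1.
  apply/funext => h; rewrite /dq /F /Defs.shift /= !mulr1 !scaler0 !addr0.
  by rewrite (addrC h).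
by case/dq_cvg_derive.
Qed.

Lemma time_slab_nbhs (R : realType) l (W : set 'rV[R]_l) (Xbar : 'rV[R]_l) (c T : R) :
  open W -> W Xbar -> 0 < c -> 0 < T ->
  nbhs (0, Xbar) [set p | - c < p.1 < T /\ W p.2].
Proof.
move=> oW WX c0 T0; exists ([set x : R | - c < x < T], W) => /=.
  split; last by apply: open_nbhs_nbhs; split.
  have := @near_in_itvoo R (- c) T 0; rewrite in_itv /= oppr_lt0 c0 T0 => /(_ isT).
  by apply: filterS => x; rewrite in_itv.
by move=> [x y] [/= hx hy]; split.
Qed.

Lemma smooth_small_near (R : realType) l (D : set (R * 'rV[R]_l))
    (f : R * 'rV[R]_l -> R) p0 (eps : R) :
  smooth_bdd D f -> nbhs p0 D -> f p0 = 0 -> 0 < eps ->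
  nbhs p0 [set p | D p /\ `|f p| < eps].
Proof.
move=> sf nD f0 eps0; have Dp0 : D p0 := nbhs_singleton nD.
have [_ [cf _]] := sf [::].
move/subspace_continuousP: cf => /(_ p0 Dp0) /cvgr_dist_lt /(_ eps eps0).
rewrite near_withinE => small.
apply: filterS2 nD small => p Dp /(_ Dp).
by rewrite /from_subspace /= f0 sub0r normrN.
Qed.

Section CubicRoots.
Variable R : realFieldType.

Definition cubic (e1 e2 e3 x : R) : R := x ^+ 3 - e1 * x ^+ 2 + e2 * x - e3.

Definition P3 (r1 r2 r3 x : R) : R := (x - r1) * (x - r2) * (x - r3).

Lemma P3_prod (r1 r2 r3 e1 e2 e3 : R) :
  (forall x, P3 r1 r2 r3 x = cubic e1 e2 e3 x) -> r1 * r2 * r3 = e3.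
Proof.
move=> /(_ 0); rewrite /P3 /cubic => root0.
have : r1 * r2 * r3 - e3 = (0 ^+ 3 - e1 * 0 ^+ 2 + e2 * 0 - e3) - (0 - r1) * (0 - r2) * (0 - r3).
  by ring.
by rewrite -root0 subrr => /eqP; rewrite subr_eq0 => /eqP.
Qed.

Lemma P3_lt0 (r1 r2 r3 q : R) : r1 <= r2 -> r2 <= r3 -> P3 r1 r2 r3 q < 0 ->
  q < r1 \/ (r2 < q /\ q < r3).
Proof.
rewrite /P3 => r12 r23 Pq.
case: (ltP q r1) => [|q1]; first by left.
right; case: (ltP r2 q) => q2; last first.
  have : 0 <= (q - r1) * ((q - r2) * (q - r3)) by apply: mulr_ge0; nra.
  by rewrite mulrA; lra.
case: (ltP q r3) => q3 //.
have : 0 <= (q - r1) * ((q - r2) * (q - r3)) by apply: mulr_ge0; nra.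
by rewrite mulrA; lra.
Qed.

Lemma P3_gt0 (r1 r2 r3 q : R) : r1 <= r2 -> r2 <= r3 -> 0 < P3 r1 r2 r3 q ->
  (r1 < q /\ q < r2) \/ r3 < q.
Proof.
rewrite /P3 => r12 r23 Pq.
case: (ltP r3 q) => [|q3]; first by right.
left; case: (ltP q r2) => q2; last first.
  have : (q - r1) * ((q - r2) * (q - r3)) <= 0 by apply: mulr_ge0_le0; nra.
  by rewrite mulrA; lra.
case: (ltP r1 q) => q1 //.
have : (q - r1) * ((q - r2) * (q - r3)) <= 0 by apply: mulr_le0_ge0; nra.
by rewrite mulrA; lra.
Qed.

Lemma roots_between (r1 r2 r3 q0 q1 q2 q3 : R) : r1 <= r2 -> r2 <= r3 ->
  q0 < q1 -> q1 < q2 -> q2 < q3 ->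
  P3 r1 r2 r3 q0 < 0 -> 0 < P3 r1 r2 r3 q1 -> P3 r1 r2 r3 q2 < 0 -> 0 < P3 r1 r2 r3 q3 ->
  [/\ q0 < r1 < q1, q1 < r2 < q2 & q2 < r3 < q3].
Proof.
move=> r12 r23 q01 q12 q23 /(P3_lt0 r12 r23) s0 /(P3_gt0 r12 r23) s1.
move=> /(P3_lt0 r12 r23) s2 /(P3_gt0 r12 r23) s3.
by case: s0 s1 s2 s3 => [?|[? ?]] [[? ?]|?] [?|[? ?]] [[? ?]|?];
  split; apply/andP; split; lra.
Qed.

Lemma P3_signs_near_roots (r1 r2 r3 eps : R) : 0 < eps -> eps < r2 - r1 -> eps < r3 - r2 ->
  [/\ P3 r1 r2 r3 (r1 - eps) < 0, 0 < P3 r1 r2 r3 (r1 + eps),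
      0 < P3 r1 r2 r3 (r2 - eps), P3 r1 r2 r3 (r2 + eps) < 0
    & P3 r1 r2 r3 (r3 - eps) < 0 /\ 0 < P3 r1 r2 r3 (r3 + eps)].
Proof.
move=> eps0 eps12 eps23; rewrite /P3; split; last split.
- have : 0 < (r1 - eps - r2) * (r1 - eps - r3) by nra.
  by rewrite -mulrA; nra.
- have : 0 < (r1 + eps - r2) * (r1 + eps - r3) by nra.
  by rewrite -mulrA; nra.
- have : 0 < (r2 - eps - r1) * (r2 - eps - r3) * (-1) by nra.
  by rewrite mulrAC; nra.
- have : 0 < (r2 + eps - r1) * (r2 + eps - r3) * (-1) by nra.
  by rewrite mulrAC; nra.
- have : 0 < (r3 - eps - r1) * (r3 - eps - r2) by nra.
  by nra.
- have : 0 < (r3 + eps - r1) * (r3 + eps - r2) by nra.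
  by nra.
Qed.
End CubicRoots.

Section SortedRootsContinuity.
Variables (R : realType) (e1 e2 e3 f1 f2 f3 : R -> R) (t : R).
Hypothesis f12 : forall s, f1 s <= f2 s.
Hypothesis f23 : forall s, f2 s <= f3 s.
Hypothesis f_roots : forall s x, P3 (f1 s) (f2 s) (f3 s) x = cubic (e1 s) (e2 s) (e3 s) x.
Hypothesis f12t : f1 t < f2 t.
Hypothesis f23t : f2 t < f3 t.
Hypothesis e1_cont : (fun h => e1 (h + t)) @ 0^' --> e1 t.
Hypothesis e2_cont : (fun h => e2 (h + t)) @ 0^' --> e2 t.
Hypothesis e3_cont : (fun h => e3 (h + t)) @ 0^' --> e3 t.

Let cubic_cont q : (fun h => cubic (e1 (h + t)) (e2 (h + t)) (e3 (h + t)) q) @ 0^'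
   --> cubic (e1 t) (e2 t) (e3 t) q.
Proof.
apply: cvgB => //; apply: cvgD; last by apply: cvgM => //; exact: cvg_cst.
by apply: cvgB; [exact: cvg_cst | apply: cvgM => //; exact: cvg_cst].
Qed.

Let neg_persists q : P3 (f1 t) (f2 t) (f3 t) q < 0 ->
  \forall h \near 0^', P3 (f1 (h + t)) (f2 (h + t)) (f3 (h + t)) q < 0.
Proof.
rewrite f_roots => /(cvgr_lt _ (@cubic_cont q) 0) near_neg.
by near=> h; rewrite f_roots; near: h.
Unshelve. all: by end_near. Qed.

Let pos_persists q : 0 < P3 (f1 t) (f2 t) (f3 t) q ->
  \forall h \near 0^', 0 < P3 (f1 (h + t)) (f2 (h + t)) (f3 (h + t)) q.
Proof.
rewrite f_roots => /(cvgr_gt _ (@cubic_cont q) 0) near_pos.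
by near=> h; rewrite f_roots; near: h.
Unshelve. all: by end_near. Qed.

(* Simple sorted roots of a cubic with continuous coefficients are continuous:
   the signs at r_i -+ eps persist, and trap the roots near the r_i. *)
Lemma sorted_roots_cont :
  [/\ (fun h => f1 (h + t)) @ 0^' --> f1 t, (fun h => f2 (h + t)) @ 0^' --> f2 t
    & (fun h => f3 (h + t)) @ 0^' --> f3 t].
Proof.
suff roots_near e : 0 < e -> \forall h \near 0^',
    [/\ `|f1 t - f1 (h + t)| < e, `|f2 t - f2 (h + t)| < e & `|f3 t - f3 (h + t)| < e].
  by split; apply/cvgrPdist_lt => e /roots_near; apply: filterS => h [].
move=> e0; set r1 := f1 t; set r2 := f2 t; set r3 := f3 t.
have r12 : r1 < r2 := f12t; have r23 : r2 < r3 := f23t.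
have [eps [eps0 epse eps12 eps23]] : exists eps : R,
    [/\ 0 < eps, eps <= e, eps < r2 - r1 & eps < r3 - r2].
  have [m [m0 m12 m23]] : exists m : R, [/\ 0 < m, m < r2 - r1 & m < r3 - r2].
    have [gap|gap] := leP (r2 - r1) (r3 - r2).
      by exists ((r2 - r1) / 2); split; lra.
    by exists ((r3 - r2) / 2); split; lra.
  have [me|me] := leP e m; first by exists e; split; lra.
  by exists m; split; lra.
have [S1 S2 S3 S4 [S5 S6]] := P3_signs_near_roots eps0 eps12 eps23.
near=> h.
have [_ /andP[lo2 _] /andP[lo3 _]] : [/\ r1 - eps < f1 (h + t) < r2 - eps,
    r2 - eps < f2 (h + t) < r3 - eps & r3 - eps < f3 (h + t) < r3 + eps].
  apply: roots_between (f12 _) (f23 _) _ _ _ _ _ _ _; try lra; near: h.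
  - exact: neg_persists.
  - exact: pos_persists.
  - exact: neg_persists.
  - exact: pos_persists.
have [/andP[lo1 hi1] /andP[_ hi2] /andP[_ hi3]] : [/\ r1 - eps < f1 (h + t) < r1 + eps,
    r1 + eps < f2 (h + t) < r2 + eps & r2 + eps < f3 (h + t) < r3 + eps].
  apply: roots_between (f12 _) (f23 _) _ _ _ _ _ _ _; try lra; near: h.
  - exact: neg_persists.
  - exact: pos_persists.
  - exact: neg_persists.
  - exact: pos_persists.
by split; rewrite ltr_norml; apply/andP; split; lra.
Unshelve. all: by end_near. Qed.
End SortedRootsContinuity.

Section SimpleRootDerivative.
Variables (R : realType) (e1 e2 e3 g u v : R -> R) (t d1 d2 d3 : R).
Hypothesis roots : forall s x, P3 (g s) (u s) (v s) x = cubic (e1 s) (e2 s) (e3 s) x.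
Hypothesis u_cont : (fun h => u (h + t)) @ 0^' --> u t.
Hypothesis v_cont : (fun h => v (h + t)) @ 0^' --> v t.
Hypothesis simple : (g t - u t) * (g t - v t) != 0.
Hypothesis de1 : dq e1 t @ 0^' --> d1.
Hypothesis de2 : dq e2 t @ 0^' --> d2.
Hypothesis de3 : dq e3 t @ 0^' --> d3.

(* Evaluating the cubic at time t + h at the point y = g t gives
   (y - g (t + h)) D h = - h Q h, with D h -> (y - u t)(y - v t) != 0
   and Q h the difference quotient of the coefficients at y. *)
Lemma simple_root_dq :
  dq g t @ 0^' --> (d1 * g t ^+ 2 - d2 * g t + d3) / ((g t - u t) * (g t - v t)).
Proof.
set y := g t.
pose D h := (y - u (h + t)) * (y - v (h + t)).
pose Q h := dq e1 t h * y ^+ 2 - dq e2 t h * y + dq e3 t h.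
have D_cvg : D @ 0^' --> (y - u t) * (y - v t).
  by apply: cvgM; apply: cvgB => //; exact: cvg_cst.
have Q_cvg : Q @ 0^' --> d1 * y ^+ 2 - d2 * y + d3.
  apply: cvgD => //; apply: cvgB; apply: cvgM => //; exact: cvg_cst.
have lim : (fun h => Q h / D h) @ 0^' --> (d1 * y ^+ 2 - d2 * y + d3) / ((y - u t) * (y - v t)).
  by apply: cvgM => //; exact: cvgV.
apply: cvg_trans lim; apply: near_eq_cvg.
have D_neq0 : \forall h \near 0^', D h != 0.
  near=> h.
  have : `|(y - u t) * (y - v t) - D h| < `|(y - u t) * (y - v t)|.
    by near: h; apply: cvgr_dist_lt => //; rewrite normr_gt0.
  by apply: contraTneq => ->; rewrite subr0 ltxx.
have y_root : cubic (e1 t) (e2 t) (e3 t) y = 0 by rewrite -roots /P3 /y subrr !mul0r.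
near=> h.
have h0 : h != 0 by near: h; exact: nbhs_dnbhs_neq.
have Dh0 : D h != 0 by near: h.
have key : (y - g (h + t)) * D h = - (h * Q h).
  rewrite /D mulrA -[LHS]/(P3 (g (h + t)) (u (h + t)) (v (h + t)) y) roots.
  rewrite -[LHS]subr0 -{1}y_root /Q /dq /cubic; field.
  exact: h0.
apply: (mulIf Dh0); rewrite divfK //.
have -> : dq g t h * D h = - (h^-1 * ((y - g (h + t)) * D h)) by rewrite /dq /y; ring.
by rewrite key mulrN opprK mulrA mulVf // mul1r.
Unshelve. all: by end_near. Qed.
End SimpleRootDerivative.

Lemma sorted_roots_dq (R : realType) (e1 e2 e3 f1 f2 f3 : R -> R) (t d1 d2 d3 : R) :
  (forall s, f1 s <= f2 s) -> (forall s, f2 s <= f3 s) ->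
  (forall s x, P3 (f1 s) (f2 s) (f3 s) x = cubic (e1 s) (e2 s) (e3 s) x) ->
  f1 t < f2 t -> f2 t < f3 t ->
  dq e1 t @ 0^' --> d1 -> dq e2 t @ 0^' --> d2 -> dq e3 t @ 0^' --> d3 ->
  dq f1 t @ 0^' --> (d1 * f1 t ^+ 2 - d2 * f1 t + d3) / ((f1 t - f2 t) * (f1 t - f3 t)) /\
  dq f2 t @ 0^' --> (d1 * f2 t ^+ 2 - d2 * f2 t + d3) / ((f2 t - f1 t) * (f2 t - f3 t)).
Proof.
move=> f12 f23 roots f12t f23t de1 de2 de3.
have [c1 c2 c3] := sorted_roots_cont f12 f23 roots f12t f23t
  (dq_cvg_cont de1) (dq_cvg_cont de2) (dq_cvg_cont de3).
split; apply: (@simple_root_dq R e1 e2 e3) => //; try by apply: mulf_neq0; apply/eqP; lra.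
by move=> s x; rewrite -roots /P3; ring.
Qed.

Section CharacteristicPolynomial.
Variable R : realFieldType.

Definition disc (a b : R) : R := 4 * a ^+ 3 - 27 * b ^+ 2.

Definition coefS1 (a : R) : R := 3 + 2 * a + a ^+ 2.
Definition coefS2 (a D : R) : R := 6 * a + 2 * a ^+ 2 + 2 / 3 * a ^+ 3 + D / 3.
Definition charS (a D x : R) : R := cubic (coefS1 a) (coefS2 a D) D x.

Lemma charS_signs (a D : R) : 0 < a -> a < 1 / 100 -> 0 <= D -> D <= 4 * a ^+ 3 ->
  [/\ charS a D (-1) < 0, 0 < charS a D (a / 2), 0 < charS a D (3 * a / 2),
      charS a D (3 * a) < 0 & charS a D 1 < 0 /\ 0 < charS a D 10].
Proof.
move=> a0 a1 D0 D1.
have a2 : a * a < a / 100 by nra.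
have a3 : a * a * a < a * a / 100 by nra.
have a4 : a * a * a * a < a * a * a / 100 by nra.
have a4p : 0 < a * a * a * a by nra.
have D3 : D <= 4 * (a * a * a) by rewrite [a * a * a](_ : _ = a ^+ 3) // !exprS expr0 mulr1 mulrA.
have aD : 0 <= a * D by nra.
rewrite /charS /cubic /coefS1 /coefS2; split; [| | | |split].
- have -> : (-1) ^+ 3 - (3 + 2 * a + a ^+ 2) * (-1) ^+ 2
      + (6 * a + 2 * a ^+ 2 + 2 / 3 * a ^+ 3 + D / 3) * (-1) - D
    = -4 - 8 * a - 3 * (a * a) - 2 / 3 * (a * a * a) - 4 / 3 * D :> R by field.
  nra.
- have -> : (a / 2) ^+ 3 - (3 + 2 * a + a ^+ 2) * (a / 2) ^+ 2
      + (6 * a + 2 * a ^+ 2 + 2 / 3 * a ^+ 3 + D / 3) * (a / 2) - D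
    = 9 / 4 * (a * a) + 5 / 8 * (a * a * a) + 1 / 12 * (a * a * a * a) + a * D / 6 - D
    :> R by field.
  nra.
- have -> : (3 * a / 2) ^+ 3 - (3 + 2 * a + a ^+ 2) * (3 * a / 2) ^+ 2
      + (6 * a + 2 * a ^+ 2 + 2 / 3 * a ^+ 3 + D / 3) * (3 * a / 2) - D
    = 9 / 4 * (a * a) + 15 / 8 * (a * a * a) - 5 / 4 * (a * a * a * a) + a * D / 2 - D
    :> R by field.
  nra.
- have -> : (3 * a) ^+ 3 - (3 + 2 * a + a ^+ 2) * (3 * a) ^+ 2
      + (6 * a + 2 * a ^+ 2 + 2 / 3 * a ^+ 3 + D / 3) * (3 * a) - D
    = -9 * (a * a) + 15 * (a * a * a) - 7 * (a * a * a * a) + a * D - D :> R by field.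
  nra.
- have -> : 1 ^+ 3 - (3 + 2 * a + a ^+ 2) * 1 ^+ 2
      + (6 * a + 2 * a ^+ 2 + 2 / 3 * a ^+ 3 + D / 3) * 1 - D
    = -2 + 4 * a + a * a + 2 / 3 * (a * a * a) - 2 / 3 * D :> R by field.
  nra.
- have -> : 10 ^+ 3 - (3 + 2 * a + a ^+ 2) * 10 ^+ 2
      + (6 * a + 2 * a ^+ 2 + 2 / 3 * a ^+ 3 + D / 3) * 10 - D
    = 700 - 140 * a - 80 * (a * a) + 20 / 3 * (a * a * a) + 7 / 3 * D :> R by field.
  nra.
Qed.

Lemma charS_root_bounds (a D l1 l2 l3 : R) :
  0 < a -> a < 1 / 100 -> 0 <= D -> D <= 4 * a ^+ 3 -> l1 <= l2 -> l2 <= l3 ->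
  (forall x, P3 l1 l2 l3 x = charS a D x) ->
  [/\ 0 <= l1, l1 < a / 2, 3 * a / 2 < l2, l2 < 3 * a & 1 < l3 < 10].
Proof.
move=> a0 a1 D0 D1 l12 l23 roots.
have [n0 p1 p2 n3 [n4 p5]] := charS_signs a0 a1 D0 D1.
move: n0 p1 p2 n3 n4 p5; rewrite -!roots => n0 p1 p2 n3 n4 p5.
have [/andP[_ l1a] _ l3b] : [/\ -1 < l1 < a / 2, a / 2 < l2 < 1 & 1 < l3 < 10].
  by apply: roots_between n0 p1 n4 p5 => //; lra.
have [_ /andP[l2a l2b] _] : [/\ -1 < l1 < 3 * a / 2, 3 * a / 2 < l2 < 3 * a & 3 * a < l3 < 10].
  by apply: roots_between n0 p2 n3 p5 => //; lra.
have l10 : 0 <= l1.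
  rewrite leNgt; apply/negP => l1n.
  have : l1 * (l2 * l3) < 0.
    by rewrite pmulr_llt0 //; apply: mulr_gt0; move: l3b => /andP[]; lra.
  by rewrite mulrA (P3_prod roots); lra.
by split.
Qed.
End CharacteristicPolynomial.

Lemma det3 (R : comNzRingType) (f : nat -> nat -> R) :
  \det (\matrix_(i < 3, j < 3) f (nat_of_ord i) (nat_of_ord j)) =
  f 0 0 * (f 1 1 * f 2 2 - f 1 2 * f 2 1)
  - f 0 1 * (f 1 0 * f 2 2 - f 1 2 * f 2 0)
  + f 0 2 * (f 1 0 * f 2 1 - f 1 1 * f 2 0).
Proof.
rewrite (expand_det_row _ ord0) !big_ord_recl big_ord0 /cofactor.
rewrite !(expand_det_row _ ord0) !big_ord_recl !big_ord0 /cofactor !det_mx11 !mxE /=.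
by rewrite /bump /=; ring.
Qed.

Lemma Smx_charpoly (R : realType) (a b x : R) :
  (char_poly (Smx a b)).[x] = charS a (disc a b) x.
Proof.
rewrite /char_poly -horner_evalE -det_map_mx.
set g := fun i j : nat => (i == j)%:R * x -
    match i, j with
    | 0, 0 => 3 | 0, 1 => 0 | 0, _ => - a
    | 1, 0 => 0 | 1, 1 => 2 * a | 1, _ => 3 * b
    | _, 0 => - a | _, 1 => 3 * b | _, _ => a ^+ 2
    end.
have -> : map_mx (horner_eval x) (char_poly_mx (Smx a b)) =
  \matrix_(i < 3, j < 3) g (nat_of_ord i) (nat_of_ord j).
  apply/matrixP => i j; rewrite !mxE /g /horner_eval /=.
  by case: i => [[|[|[|i]]] Hi] //=; case: j => [[|[|[|j]]] Hj] //=;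
    rewrite ?hornerE /=; ring.
by rewrite det3 /g /charS /cubic /coefS1 /coefS2 /disc /=; field.
Qed.

Lemma Smx_eigen_roots (R : realType) (a b l1 l2 l3 : R) :
  sorted_eigenvalues (Smx a b) l1 l2 l3 -> forall x, P3 l1 l2 l3 x = charS a (disc a b) x.
Proof. by move=> [_ cp] x; rewrite -Smx_charpoly cp /P3 !hornerE. Qed.

Section RateEstimates.
Variable R : realFieldType.

(* e1' x^2 - e2' x + e3' for the coefficients of charS a D, where a' and D'
   are the time derivatives of a and D: the numerator in the derivative of a
   simple eigenvalue x. *)
Definition charS_dt (a a' D' x : R) : R :=
  (2 + 2 * a) * a' * x ^+ 2 - ((6 + 4 * a + 2 * a ^+ 2) * a' + D' / 3) * x + D'.

Lemma charS_dt_split (a a' D' x : R) :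
  charS_dt a a' D' x = a' * (x * ((2 + 2 * a) * x - (6 + 4 * a + 2 * a ^+ 2))) + D' * (1 - x / 3).
Proof. by rewrite /charS_dt; field. Qed.

(* The weight of a' in charS_dt at a small root x is O(x). *)
Lemma small_root_weight (a x : R) : 0 < a -> a < 1 / 100 -> 0 <= x -> x < 3 * a ->
  `|x * ((2 + 2 * a) * x - (6 + 4 * a + 2 * a ^+ 2))| <= 10 * x.
Proof.
move=> a0 a1 x0 x3a; rewrite normrM ger0_norm // mulrC; apply: ler_wpM2r => //.
by rewrite ler_norml; apply/andP; split; nra.
Qed.

Lemma rate_bound (phi C a D l L Q A' D' p q : R) :
  0 < phi -> 0 < C -> 0 < a -> 0 <= D ->
  phi * `|A'| <= C * a -> phi * `|D'| <= C * D ->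
  L * Q = A' * p + D' * q -> a / 2 <= `|Q| ->
  `|p| <= 10 * l -> `|q| <= 1 -> D <= 30 * a * l ->
  phi * `|L| <= 100 * C * l.
Proof.
move=> phi0 C0 a0 D0 hA hD LQ hQ hp hq hDl.
have l0 : 0 <= l by have := normr_ge0 p; lra.
have upper : phi * `|L * Q| <= C * a * `|p| + C * D * `|q|.
  rewrite LQ; apply: (@le_trans _ _ (phi * (`|A'| * `|p| + `|D'| * `|q|))).
    by rewrite ler_pM2l // -!normrM ler_normD.
  by rewrite mulrDr !mulrA; apply: lerD; apply: ler_wpM2r.
have hp' : C * a * `|p| <= C * a * (10 * l) by rewrite ler_wpM2l // mulr_ge0 // ltW.
have hq' : C * D * `|q| <= C * D by rewrite ler_piMr // mulr_ge0 // ltW.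
have hD' : C * D <= C * (30 * a * l) by rewrite ler_wpM2l // ltW.
have lower : phi * `|L| * (a / 2) <= phi * `|L * Q|.
  by rewrite normrM (mulrA phi) ler_wpM2l // mulr_ge0 // ltW.
have Cal : 0 <= C * a * l by rewrite !mulr_ge0 // ltW.
have : phi * `|L| * (a / 2) <= 100 * C * l * (a / 2) by lra.
by rewrite ler_pM2r //; lra.
Qed.

Lemma eigen_estimates (a D l1 l2 l3 A' D' L1 L2 phi C : R) :
  0 < a -> a < 1 / 100 -> 0 <= D -> 0 < phi -> 0 < C ->
  0 <= l1 -> l1 < a / 2 -> 3 * a / 2 < l2 -> l2 < 3 * a -> 1 < l3 -> l3 < 10 ->
  l1 * l2 * l3 = D ->
  phi ^+ 2 * a <= C * D -> phi * `|D'| <= C * D -> phi * `|A'| <= C * a ->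
  L1 * ((l1 - l2) * (l1 - l3)) = charS_dt a A' D' l1 ->
  L2 * ((l2 - l1) * (l2 - l3)) = charS_dt a A' D' l2 ->
  [/\ phi ^+ 2 <= 100 * C * l1, phi * `|L1| <= 100 * C * l1 & phi * `|L2| <= 100 * C * l2].
Proof.
move=> a0 a1 D0 phi0 C0 l10 l1a l2a l2b l3a l3b prod hphi hD hA E1 E2.
have l20 : 0 <= l2 by lra.
have l30 : 0 <= l3 by lra.
have D_l1 : D <= 30 * a * l1.
  have l23 : l2 * l3 <= 3 * a * 10 by apply: ler_pM => //; lra.
  by have := ler_wpM2l l10 l23; lra.
have D_l2 : D <= 30 * a * l2.
  have l13 : l1 * l3 <= a / 2 * 10 by apply: ler_pM => //; lra.
  by have := ler_wpM2l l20 l13; lra.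
have gap1 : a * (1 / 2) <= (l2 - l1) * (l3 - l1) by apply: ler_pM; lra.
have gap2 : a * (1 / 2) <= (l2 - l1) * (l3 - l2) by apply: ler_pM; lra.
have q_bound x : 0 <= x -> x < 3 * a -> `|1 - x / 3| <= 1.
  by move=> x0 x3a; rewrite ler_norml; apply/andP; split; lra.
split.
- have CD : C * D <= C * (30 * a * l1) by rewrite ler_wpM2l // ltW.
  have Cal : 0 <= C * a * l1 by rewrite !mulr_ge0 // ltW.
  have : phi ^+ 2 * a <= 100 * C * l1 * a by lra.
  by rewrite ler_pM2r.
- have l1_3a : l1 < 3 * a by lra.
  have Q1 : a / 2 <= `|(l1 - l2) * (l1 - l3)| by rewrite ger0_norm; lra.
  apply: (rate_bound phi0 C0 a0 D0 hA hD _ Q1 (small_root_weight a0 a1 l10 l1_3a)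
    (q_bound _ l10 l1_3a) D_l1).
  by rewrite E1 charS_dt_split.
- have Q2 : a / 2 <= `|(l2 - l1) * (l2 - l3)| by rewrite ler0_norm; lra.
  apply: (rate_bound phi0 C0 a0 D0 hA hD _ Q2 (small_root_weight a0 a1 l20 l2b)
    (q_bound _ l20 l2b) D_l2).
  by rewrite E2 charS_dt_split.
Qed.
End RateEstimates.

Section EigenvalueRegularity.
Variable R : realType.

Lemma coefS_dq (alpha Delta : R -> R) (t A' D' : R) :
  dq alpha t @ 0^' --> A' -> dq Delta t @ 0^' --> D' ->
  dq (fun s => coefS1 (alpha s)) t @ 0^' --> (2 + 2 * alpha t) * A' /\
  dq (fun s => coefS2 (alpha s) (Delta s)) t @ 0^'
    --> (6 + 4 * alpha t + 2 * alpha t ^+ 2) * A' + D' / 3.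
Proof.
move=> dA dD; split.
- have -> : (fun s => coefS1 (alpha s)) = (fun s => 3 + 2 * alpha s + alpha s * alpha s).
    by apply/funext => s; rewrite /coefS1 expr2.
  have -> : (2 + 2 * alpha t) * A' = 0 + 2 * A' + (A' * alpha t + alpha t * A') by ring.
  by apply: dqD_cvg; [apply: dqD_cvg; [exact: dqC_cvg | exact: dqZ_cvg] | exact: dqM_cvg].
- have -> : (fun s => coefS2 (alpha s) (Delta s)) = (fun s => 6 * alpha s
      + 2 * (alpha s * alpha s) + 2 / 3 * (alpha s * alpha s * alpha s) + 3^-1 * Delta s).
    by apply/funext => s; rewrite /coefS2; field.
  have -> : (6 + 4 * alpha t + 2 * alpha t ^+ 2) * A' + D' / 3 = 6 * A'
      + 2 * (A' * alpha t + alpha t * A')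
      + 2 / 3 * ((A' * alpha t + alpha t * A') * alpha t + alpha t * alpha t * A')
      + 3^-1 * D' by field.
  apply: dqD_cvg; last exact: dqZ_cvg.
  apply: dqD_cvg; last by apply: dqZ_cvg; apply: dqM_cvg => //; exact: dqM_cvg.
  by apply: dqD_cvg; apply: dqZ_cvg => //; exact: dqM_cvg.
Qed.

Lemma eigen_derivatives (alpha beta mu1 mu2 mu3 : R -> R) (t : R) :
  derivable alpha t 1 -> derivable beta t 1 ->
  (forall s, sorted_eigenvalues (Smx (alpha s) (beta s)) (mu1 s) (mu2 s) (mu3 s)) ->
  mu1 t < mu2 t -> mu2 t < mu3 t ->
  let D' := derive1 (fun s => disc (alpha s) (beta s)) t in
  [/\ derivable mu1 t 1, derivable mu2 t 1,
      derive1 mu1 t * ((mu1 t - mu2 t) * (mu1 t - mu3 t))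
        = charS_dt (alpha t) (derive1 alpha t) D' (mu1 t)
    & derive1 mu2 t * ((mu2 t - mu1 t) * (mu2 t - mu3 t))
        = charS_dt (alpha t) (derive1 alpha t) D' (mu2 t)].
Proof.
move=> da db eig m12 m23 D'.
have dDelta : derivable (fun s => disc (alpha s) (beta s)) t 1.
  have -> : (fun s => disc (alpha s) (beta s)) = 4 \*: alpha ^+ 3 - 27 \*: beta ^+ 2.
    by apply/funext => s; rewrite /disc /= !exprfctE.
  by apply: derivableB; apply: derivableZ; apply: derivableX.
have [de1 de2] := coefS_dq (derivable_dq_cvg da) (derivable_dq_cvg dDelta).
have sorted s : mu1 s <= mu2 s /\ mu2 s <= mu3 s by case: (eig s) => /andP.
have [dq1 dq2] := sorted_roots_dq (e3 := fun s => disc (alpha s) (beta s))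
  (fun s => (sorted s).1) (fun s => (sorted s).2) (fun s => Smx_eigen_roots (eig s))
  m12 m23 de1 de2 (derivable_dq_cvg dDelta).
have [dv1 ->] := dq_cvg_derive dq1; have [dv2 ->] := dq_cvg_derive dq2.
by split; rewrite // divfK //; apply: mulf_neq0; apply/eqP; lra.
Qed.

Lemma eigen_rates_at (alpha beta mu1 mu2 mu3 : R -> R) (t : R) :
  derivable alpha t 1 -> derivable beta t 1 ->
  (forall s, sorted_eigenvalues (Smx (alpha s) (beta s)) (mu1 s) (mu2 s) (mu3 s)) ->
  0 < alpha t -> alpha t < 1 / 100 -> 0 <= disc (alpha t) (beta t) ->
  [/\ derivable mu1 t 1, derivable mu2 t 1 &
    forall phi C : R, 0 < phi -> 0 < C ->
    phi ^+ 2 * alpha t <= C * disc (alpha t) (beta t) ->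
    phi * `|derive1 (fun s => disc (alpha s) (beta s)) t| <= C * disc (alpha t) (beta t) ->
    phi * `|derive1 alpha t| <= C * alpha t ->
    [/\ phi ^+ 2 <= 100 * C * mu1 t, phi * `|derive1 mu1 t| <= 100 * C * mu1 t
      & phi * `|derive1 mu2 t| <= 100 * C * mu2 t]].
Proof.
move=> da db eig a0 a1 D0.
have roots := Smx_eigen_roots (eig t).
have [/andP[m12 m23] _] := eig t.
have D4 : disc (alpha t) (beta t) <= 4 * alpha t ^+ 3.
  by rewrite /disc; have := sqr_ge0 (beta t); lra.
have [l10 l1a l2a l2b /andP[l3a l3b]] := charS_root_bounds a0 a1 D0 D4 m12 m23 roots.
have [||dv1 dv2 E1 E2] := eigen_derivatives da db eig; try lra.
split => // phi C phi0 C0 hphi hD hA.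
exact: eigen_estimates a0 a1 D0 phi0 C0 l10 l1a l2a l2b l3a l3b (P3_prod roots) hphi hD hA E1 E2.
Qed.
End EigenvalueRegularity.

Theorem lemma3p1 (R : realType) (l : nat) (W : set 'rV[R]_l) (Xbar : 'rV[R]_l)
  (c T : R) (a b : R -> 'rV[R]_l -> R)
  (lam1 lam2 lam3 : R -> 'rV[R]_l -> R) :
  open W -> W Xbar -> 0 < c -> 0 < T ->
  smooth_bdd [set p | - c < p.1 < T /\ W p.2] (fun p => a p.1 p.2) ->
  smooth_bdd [set p | - c < p.1 < T /\ W p.2] (fun p => b p.1 p.2) ->
  (forall t X, 0 <= t < T -> W X -> 0 <= 4 * a t X ^+ 3 - 27 * b t X ^+ 2) ->
  a 0 Xbar = 0 ->
  (forall t X, 0 < t < T -> W X -> 0 < a t X) ->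
  (forall t X, sorted_eigenvalues (Smx (a t X) (b t X))
                 (lam1 t X) (lam2 t X) (lam3 t X)) ->
  exists U : set (R * 'rV[R]_l), nbhs (0, Xbar) U /\
    (forall t X, U (t, X) -> 0 < t ->
       derivable (fun s => lam1 s X) t 1 /\ derivable (fun s => lam2 s X) t 1) /\
    forall (omega : set (R * 'rV[R]_l)) (phi : R -> 'rV[R]_l -> R) (C : R),
      omega `<=` [set p | U p /\ 0 < p.1] ->
      (forall t X, omega (t, X) -> 0 < phi t X) ->
      (exists M : R, forall t X, omega (t, X) -> phi t X <= M) ->
      0 < C ->
      (forall t X, omega (t, X) ->
         let Delta := fun s => 4 * a s X ^+ 3 - 27 * b s X ^+ 2 in
         phi t X ^+ 2 * a t X <= C * Delta t /\
         phi t X * `|derive1 Delta t| <= C * Delta t /\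
         phi t X * `|derive1 (fun s => a s X) t| <= C * a t X) ->
      exists C' : R, 0 < C' /\
        forall t X, omega (t, X) ->
          phi t X ^+ 2 <= C' * lam1 t X /\
          phi t X * `|derive1 (fun s => lam1 s X) t| <= C' * lam1 t X /\
          phi t X * `|derive1 (fun s => lam2 s X) t| <= C' * lam2 t X.
Proof.
move=> oW WX c0 T0 sa sb Delta0 a00 apos eig.
set Dom := [set p : R * 'rV[R]_l | - c < p.1 < T /\ W p.2].
set U := [set p | Dom p /\ `|a p.1 p.2| < 1 / 100].
have nU : nbhs (0, Xbar) U.
  by apply: smooth_small_near sa (time_slab_nbhs oW WX c0 T0) a00 _; lra.
have da t X : U (t, X) -> derivable (fun s => a s X) t 1.
  by case=> Dp _; exact: smooth_bdd_derivable_t sa Dp.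
have db t X : U (t, X) -> derivable (fun s => b s X) t 1.
  by case=> Dp _; exact: smooth_bdd_derivable_t sb Dp.
have small t X : U (t, X) -> a t X < 1 / 100 by case=> _; rewrite ltr_norml => /andP[].
have pos t X : U (t, X) -> 0 < t -> 0 < a t X /\ 0 <= disc (a t X) (b t X).
  case=> -[/andP[_ tT] WXt] _ t0; split; first by apply: apos; rewrite ?t0.
  by apply: Delta0; rewrite ?tT ?ltW.
have rates t X (Ut : U (t, X)) (t0 : 0 < t) := eigen_rates_at (da t X Ut) (db t X Ut)
  (fun s => eig s X) (pos t X Ut t0).1 (small t X Ut) (pos t X Ut t0).2.
exists U; split => //; split=> [t X Ut t0|omega phi C omegaU phi0 _ C0 hyp].
  by have [] := rates t X Ut t0.
exists (100 * C); split=> [|t X oX]; first exact: mulr_gt0.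
have [Ut t0] := omegaU _ oX.
have [_ _ estimate] := rates t X Ut t0.
by have [h1 [h2 h3]] := hyp t X oX; have [] := estimate _ _ (phi0 t X oX) C0 h1 h2 h3.
Qed.
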